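(* Consider the nonpreemptive Lazy Bureaucrat Problem in which every job has unit processing time ($t_1=\cdots=t_n=1$) and all data are integers. The Latest Due Date (LDD) policy — at each integer time $\tau$ at which the processor is free, if some job is executable at $\tau$, start an executable job with the largest deadline (ties broken arbitrarily) — produces a feasible schedule that minimizes objective (1), the total amount of executed work, over all feasible schedules.
   Context: An instance of the Lazy Bureaucrat Problem (LBP) consists of jobs $1,\dots,n$; job $i$ has a processing time $t_i$, an arrival time $a_i$ and a deadline $d_i$, all nonnegative integers. Its critical time is $c_i=d_i-t_i$. A single processor (the bureaucrat) processes at most one job at a time. In the nonpreemptive setting, a schedule chooses a set of executed jobs and, for each executed job $i$, a start time $s_i$ with $a_i\le s_i\le c_i$; job $i$ is then processed without interruption during $[s_i,s_i+t_i)$, these intervals are pairwise disjoint, and each job is executed at most once. A job $i$ is executable at time $\tau$ if it has not been started before $\tau$ and $a_i\le\tau\le c_i$. A schedule is feasible if it satisfies the busy requirement: at every time $\tau$ at which the processor is not processing a job, no job is executable. Objective (1) is the total time spent working, $\sum t_i$ over executed jobs, to be minimized over feasible schedules. *)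

From HB Require Import structures.
From mathcomp Require Import all_boot all_order all_algebra.
From mathcomp Require Import reals.
Set Implicit Arguments. Unset Strict Implicit. Unset Printing Implicit Defensive.
Import Order.TTheory GRing.Theory Num.Theory.
Local Open Scope ring_scope.

Section LBP.
Variables (R : realType) (n : nat).

(* An instance: processing times t, arrival times a, deadlines d (nonnegative
   integers), jobs indexed by 'I_n.  Critical time c_i = d_i - t_i (in R, so
   it may be negative). *)
Variables (t a d : 'I_n -> nat).

Definition crit (i : 'I_n) : R := (d i)%:R - (t i)%:R.

Definition processing (E : {set 'I_n}) (s : 'I_n -> R) (tau : R) : Prop :=
  exists2 i, i \in E & s i <= tau < s i + (t i)%:R.

Definition executable (E : {set 'I_n}) (s : 'I_n -> R) (j : 'I_n) (tau : R)
  : Prop :=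
  ~ (j \in E /\ s j < tau) /\ (a j)%:R <= tau <= crit j.

Definition feasible (E : {set 'I_n}) (s : 'I_n -> R) : Prop :=
  (forall i, i \in E -> (a i)%:R <= s i <= crit i) /\
  (forall i j, i \in E -> j \in E -> i != j ->
      s i + (t i)%:R <= s j \/ s j + (t j)%:R <= s i) /\
  (forall tau : R, ~ processing E s tau -> forall j, ~ executable E s j tau).

Definition work (E : {set 'I_n}) : nat := \sum_(i in E) t i.

Definition free_at (E : {set 'I_n}) (s : 'I_n -> R) (tau : R) : Prop :=
  ~ (exists2 i, i \in E & s i < tau < s i + (t i)%:R).

(* (E, s) is a schedule produced by the LDD policy (with some tie-breaking):
   decisions are taken only at integer times; at each integer time tau at
   which the processor is free, if some job is executable, an executable job
   with the largest deadline is started at tau (and only one job); no job is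
   started otherwise. *)
Definition LDD_schedule (E : {set 'I_n}) (s : 'I_n -> R) : Prop :=
  (forall i, i \in E -> exists k : nat, s i = k%:R) /\
  (forall i j, i \in E -> j \in E -> s i = s j -> i = j) /\
  (forall (tau : nat) i, i \in E -> s i = tau%:R ->
     [/\ free_at E s tau%:R, executable E s i tau%:R &
         forall j, executable E s j tau%:R -> (d j <= d i)%N]) /\
  (forall tau : nat, free_at E s tau%:R ->
     (exists j, executable E s j tau%:R) ->
     exists2 i, i \in E & s i = tau%:R).

End LBP.

From mathcomp Require Import all_boot all_order all_algebra.
From mathcomp Require Import reals lra zify.
Set Implicit Arguments. Unset Strict Implicit. Unset Printing Implicit Defensive.
Import Order.TTheory GRing.Theory Num.Theory.

(* Sample a schedule at integer times: B tau is the set of jobs finished by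
   time tau.  With unit jobs, from B tau to B tau.+1 either nothing happens
   (and then, by the busy requirement, no job is available at tau) or one job
   available at tau is added; for LDD it is one of largest deadline.  For
   th >= tau consider the potential
     |B tau| + #{j not in B tau | a j <= tau, th < d j}.
   Arrivals raise it equally for every schedule, and executing x raises it by
   [d x <= th].  By induction on tau the potential of LDD never exceeds that
   of any feasible schedule, for every th >= tau; taking th beyond all
   deadlines compares the numbers of executed jobs. *)

Section UnitTimeSchedules.
Variables (n : nat) (a d : 'I_n -> nat).
Implicit Types (B BL BS : {set 'I_n}) (tau th : nat).

Definition avail B tau j : bool := [&& j \notin B, a j <= tau & tau < d j].

Definition ldd_choice B tau x : Prop :=
  avail B tau x /\ forall j, avail B tau j -> d j <= d x.

Definition idle_step B B' tau : Prop := B' = B /\ forall j, ~~ avail B tau j.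

Definition unit_step B B' tau : Prop :=
  idle_step B B' tau \/ exists2 x, avail B tau x & B' = x |: B.

Definition ldd_step B B' tau : Prop :=
  idle_step B B' tau \/ exists2 x, ldd_choice B tau x & B' = x |: B.

Definition ldd_pick B tau : option 'I_n :=
  [pick x | avail B tau x && [forall j, avail B tau j ==> (d j <= d x)]].

Lemma ldd_pick_some B tau x : ldd_pick B tau = Some x -> ldd_choice B tau x.
Proof.
rewrite /ldd_pick; case: pickP => // y /andP[ay /forallP ymax] [<-].
by split=> // j aj; have := ymax j; rewrite aj.
Qed.

Lemma ldd_pick_avail B tau j : avail B tau j -> exists x, ldd_pick B tau = Some x.
Proof.
move=> aj; rewrite /ldd_pick; case: pickP => [x _|none]; first by exists x.
have [x ax xmax] := arg_maxnP d aj.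
by have := none x; rewrite ax; case/negP; apply/forallP => k; apply/implyP/xmax.
Qed.

Definition logged (p : seq (option 'I_n)) : {set 'I_n} := [set j | Some j \in p].

(* The decisions of the LDD rule at times [0, ..., tau - 1]; [None] records
   an idle step. *)
Fixpoint ldd_log tau : seq (option 'I_n) :=
  if tau is k.+1 then rcons (ldd_log k) (ldd_pick (logged (ldd_log k)) k) else [::].

Lemma size_ldd_log m : size (ldd_log m) = m.
Proof. by elim: m => //= m IH; rewrite size_rcons IH. Qed.

Lemma take_ldd_log tau m : tau <= m -> take tau (ldd_log m) = ldd_log tau.
Proof.
elim: m => [|m IH]; first by rewrite leqn0 => /eqP ->.
rewrite leq_eqVlt => /orP[/eqP ->|]; first by rewrite -{1}(size_ldd_log m.+1) take_size.
by rewrite ltnS /= -cats1 => le; rewrite takel_cat ?IH ?size_ldd_log.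
Qed.

Lemma nth_ldd_log tau m : tau < m ->
  nth None (ldd_log m) tau = ldd_pick (logged (ldd_log tau)) tau.
Proof.
move=> lt; rewrite -(nth_take _ (ltnSn tau)) take_ldd_log //=.
by rewrite nth_rcons size_ldd_log ltnn eqxx.
Qed.

Lemma mem_ldd_log tau m x : tau <= m -> (x \in ldd_log tau) = (index x (ldd_log m) < tau).
Proof. by move=> le; rewrite -(take_ldd_log le) in_take_leq ?size_ldd_log. Qed.

Lemma index_ldd_log tau m i : tau < m -> nth None (ldd_log m) tau = Some i ->
  index (Some i) (ldd_log m) = tau.
Proof.
move=> lt; rewrite nth_ldd_log // => pick; have [/and3P[new _ _] _] := ldd_pick_some pick.
have : Some i \in ldd_log tau.+1 by rewrite /= pick mem_rcons mem_head.
rewrite (mem_ldd_log _ lt) ltnS; move: new; rewrite inE (mem_ldd_log _ (ltnW lt)).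
by rewrite -leqNgt => ge le; apply/eqP; rewrite eqn_leq le ge.
Qed.

Definition pending B tau th : {set 'I_n} :=
  [set j | [&& j \notin B, a j <= tau & th < d j]].

Definition potential B tau th : nat := #|B| + #|pending B tau th|.

Lemma pending_avail B tau th j : tau <= th -> j \in pending B tau th -> avail B tau j.
Proof. by rewrite /avail inE => le /and3P[-> -> /(leq_ltn_trans le)]. Qed.

Lemma avail_pending B tau th j : avail B tau j -> th < d j -> j \in pending B tau th.
Proof. by rewrite inE => /and3P[-> -> _]. Qed.

Lemma pending_late B tau th : (forall j, d j <= th) -> pending B tau th = set0.
Proof. by move=> late; apply/setP => j; rewrite !inE ltnNge late !andbF. Qed.

Lemma potential_gt B tau th j : j \in pending B tau th -> #|B| < potential B tau th.
Proof. by move=> jp; rewrite -addn1 leq_add2l; apply/card_gt0P; exists j. Qed.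

Lemma potential_eq_card B tau th : tau <= th ->
  (forall j, avail B tau j -> d j <= th) -> potential B tau th = #|B|.
Proof.
move=> le late; rewrite /potential -[RHS]addn0; congr (_ + _); apply/eqP.
rewrite cards_eq0 -subset0; apply/subsetP => j jp; move: (jp); rewrite inE ltnNge.
by rewrite late ?(pending_avail le jp) ?andbF.
Qed.

Lemma potential_idle B tau th : tau <= th -> (forall j, ~~ avail B tau j) ->
  potential B tau th = #|B|.
Proof. by move=> le nav; apply: potential_eq_card le _ => j; rewrite (negbTE (nav j)). Qed.

Lemma potential_succ B tau th : (forall j, j \in B -> a j <= tau) ->
  potential B tau.+1 th =
  potential B tau th + #|[set j | (a j == tau.+1) && (th < d j)]|.
Proof.
move=> arrived; rewrite /potential; set N := [set j | _].
have -> : pending B tau.+1 th = pending B tau th :|: N.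
  apply/setP => j; rewrite !inE leq_eqVlt ltnS.
  case: (boolP (j \in B)) => [/arrived|_] /=.
    by case: eqP => [->|]; rewrite ?ltnn.
  by case: (a j == tau.+1); case: (a j <= tau); case: (th < d j).
have disj : pending B tau th :&: N = set0.
  apply/setP => j; rewrite !inE.
  by case: eqP => [->|]; rewrite ?ltnn ?andbF.
by rewrite -addnA -[#|pending _ _ _| + _]cardsUI disj cards0 addn0.
Qed.

Lemma potential_exec B tau th x : avail B tau x ->
  potential (x |: B) tau th = potential B tau th + (d x <= th).
Proof.
case/and3P=> xB xa xd; rewrite /potential cardsU1 xB.
rewrite (cardsD1 x (pending B tau th)) !inE xB xa /=.
suff -> : pending (x |: B) tau th = pending B tau th :\ x by case: leqP; lia.
by apply/setP => j; rewrite !inE negb_or -!andbA.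
Qed.

Definition dominated BL BS tau : Prop :=
  forall th, tau <= th -> potential BL tau th <= potential BS tau th.

Lemma dominated_card BL BS tau : dominated BL BS tau -> #|BL| <= #|BS|.
Proof.
pose th := maxn tau (\max_i d i).
have late j : d j <= th by rewrite leq_max leq_bigmax orbT.
by move/(_ th (leq_maxl _ _)); rewrite /potential !pending_late // !cards0 !addn0.
Qed.

(* The delicate case: LDD starts [x] with [d x <= th].  Then no job pending
   for LDD has a deadline beyond [th], and the other schedule is already one
   job ahead: through its own pending jobs at [th], or through [x] at [tau]. *)
Lemma dominated_exec BL BL' BS BS' tau th :
  ldd_step BL BL' tau -> unit_step BS BS' tau -> dominated BL BS tau ->
  tau <= th -> potential BL' tau th <= potential BS' tau th.
Proof.
move=> stepL stepS dom le; have dom_th := dom th le.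
have growS : potential BS tau th <= potential BS' tau th.
  by case: stepS => [[-> _]|[y ay ->]]; rewrite ?potential_exec ?leq_addr.
case: stepL => [[-> _]|[x xL ->]]; first exact: leq_trans growS.
have [ax _] := xL; rewrite potential_exec //.
case: (leqP (d x) th) => [xth|_]; last by rewrite addn0 (leq_trans dom_th growS).
have {}xL : potential BL tau th = #|BL|.
  by apply: potential_eq_card le _ => j /xL.2 /leq_trans; apply.
rewrite xL addn1.
case: stepS => [[-> noS]|[y ay ->]].
  have := dom tau (leqnn _).
  rewrite (potential_idle le noS) (potential_idle (leqnn _) noS).
  by apply: leq_trans; apply: potential_gt (avail_pending ax _); case/and3P: ax.
rewrite potential_exec //; case: (leqP (d y) th) => yth.
  by rewrite addn1 ltnS -xL.
rewrite addn0; apply: leq_ltn_trans (dominated_card dom) _.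
exact: potential_gt (avail_pending ay yth).
Qed.

Lemma dominated_succ BL (BL' : {set 'I_n}) BS (BS' : {set 'I_n}) tau :
  (forall j, j \in BL' -> a j <= tau) -> (forall j, j \in BS' -> a j <= tau) ->
  ldd_step BL BL' tau -> unit_step BS BS' tau -> dominated BL BS tau ->
  dominated BL' BS' tau.+1.
Proof.
move=> arrL arrS stepL stepS dom th le.
rewrite !potential_succ // leq_add2r.
exact: dominated_exec stepL stepS dom (ltnW le).
Qed.

Lemma leq_card_ldd (BL BS : nat -> {set 'I_n}) :
  BL 0 = set0 -> BS 0 = set0 ->
  (forall tau j, j \in BL tau -> a j < tau) ->
  (forall tau j, j \in BS tau -> a j < tau) ->
  (forall tau, ldd_step (BL tau) (BL tau.+1) tau) ->
  (forall tau, unit_step (BS tau) (BS tau.+1) tau) ->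
  forall tau, #|BL tau| <= #|BS tau|.
Proof.
move=> L0 S0 arrL arrS stepL stepS tau.
suff dom : dominated (BL tau) (BS tau) tau by apply: dominated_card dom.
elim: tau => [|tau IH]; first by rewrite L0 S0.
by apply: dominated_succ IH => // j; [move/arrL | move/arrS].
Qed.

End UnitTimeSchedules.

Section Discretization.
Variables (R : realType) (n : nat) (a d : 'I_n -> nat).
Local Notation t1 := (fun _ : 'I_n => 1%N).
Local Open Scope ring_scope.
Implicit Types (E : {set 'I_n}) (s : 'I_n -> R).

Lemma ler_nat_crit (tau : nat) j : (tau%:R <= crit R t1 d j) = (tau < d j)%N.
Proof. by rewrite /crit lerBrDr natr1 ler_nat. Qed.

Definition completed E s (tau : nat) : {set 'I_n} :=
  [set i in E | s i + 1 <= tau%:R].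

Lemma free_at_nat E s : (forall i, i \in E -> exists k : nat, s i = k%:R) ->
  forall k : nat, free_at t1 E s k%:R.
Proof. by move=> int k [i /int[m ->]]; rewrite natr1 !ltr_nat; lia. Qed.

Lemma completed_executable E s tau j : free_at t1 E s tau%:R ->
  avail a d (completed E s tau) tau j -> executable t1 a d E s j tau%:R.
Proof.
move=> free /and3P[jB ja jd]; rewrite /executable ler_nat_crit ler_nat ja jd.
split=> // -[jE js]; apply: free; exists j => //=.
by move: jB; rewrite js inE jE /= -ltNge.
Qed.

Section Feasible.
Variables (E : {set 'I_n}) (s : 'I_n -> R).
Hypothesis feasE : feasible t1 a d E s.

Lemma feasible_window i : i \in E -> (a i)%:R <= s i /\ s i + 1 <= (d i)%:R.
Proof. by case: feasE => win _ /win /andP[-> ]; rewrite /crit lerBrDr. Qed.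

Lemma completed0 : completed E s 0 = set0.
Proof.
apply/setP => j; rewrite !inE; apply/negP => /andP[/feasible_window[aj _] sj].
by have : 0 <= (a j)%:R :> R by []; lra.
Qed.

Lemma completed_late T : (forall j, (d j <= T)%N) -> completed E s T = E.
Proof.
move=> late; apply/setP => j; rewrite !inE andb_idr // => /feasible_window[_ dj].
by apply: le_trans dj _; rewrite ler_nat.
Qed.

Lemma completed_arrived tau j : j \in completed E s tau -> (a j < tau)%N.
Proof. by rewrite inE -(ltr_nat R) => /andP[/feasible_window[aj _] sj]; lra. Qed.

Lemma completed_running tau x : x \in E -> s x <= tau%:R < s x + 1 ->
  completed E s tau.+1 = x |: completed E s tau.
Proof.
case: feasE => _ [disj _] xE /andP[sx xs]; apply/setP => i; rewrite !inE -natr1.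
have [->|ix] := eqVneq i x; first by rewrite xE /=; lra.
case: (boolP (i \in E)) => //= iE; apply/idP/idP => [ends|]; last by lra.
by have := disj i x iE xE ix; lra.
Qed.

Lemma completed_idle tau : ~ processing t1 E s tau%:R ->
  completed E s tau.+1 = completed E s tau.
Proof.
move=> idle; apply/setP => i; rewrite !inE -natr1; case: (boolP (i \in E)) => //= iE.
apply/idP/idP => [ends|]; last by lra.
by case: (ltrP tau%:R (s i + 1)) => // late; case: idle; exists i => //=; lra.
Qed.

Lemma running_avail tau x : x \in E -> s x <= tau%:R < s x + 1 ->
  avail a d (completed E s tau) tau x.
Proof.
move=> xE /andP[sx xs]; have [ax dx] := feasible_window xE.
rewrite /avail inE xE /= -ltNge xs -(ler_nat R) -(ltr_nat R); apply/andP; lra.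
Qed.

Lemma completed_step tau :
  idle_step a d (completed E s tau) (completed E s tau.+1) tau \/
  exists2 x, x \in E & s x <= tau%:R < s x + 1 /\
    completed E s tau.+1 = x |: completed E s tau.
Proof.
case: (boolP [exists x, (x \in E) && (s x <= tau%:R < s x + 1)]).
  case/existsP => x /andP[xE run]; right; exists x => //.
  by split=> //; apply: completed_running.
rewrite negb_exists => /forallP noRun.
have idle : ~ processing t1 E s tau%:R.
  by case=> x xE run; have := noRun x; rewrite xE run.
left; split; first exact: completed_idle.
have [_ [_ busy]] := feasE.
have free : free_at t1 E s tau%:R.
  by case=> x xE /andP[sx xs]; apply: idle; exists x => //; rewrite (ltW sx) xs.
by move=> j; apply/negP => /(completed_executable free); apply: busy idle j.
Qed.

Lemma completed_unit_step tau :
  unit_step a d (completed E s tau) (completed E s tau.+1) tau.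
Proof.
case: (completed_step tau) => [idle|[x xE [run ->]]]; first by left.
by right; exists x => //; apply: running_avail.
Qed.

End Feasible.

Lemma executable_truncn E s j tau : executable t1 a d E s j tau ->
  executable t1 a d E s j (Num.truncn tau)%:R.
Proof.
case=> fresh /andP[aj jc]; have t0 : 0 <= tau := le_trans (ler0n _ _) aj.
have /andP[k1 k2] := truncn_itv t0.
split; first by case=> jE js; apply: fresh; split => //; apply: lt_le_trans js k1.
by rewrite ler_nat truncn_ge_nat // aj (le_trans k1 jc).
Qed.

Section LDD.
Variables (E : {set 'I_n}) (s : 'I_n -> R).
Hypothesis lddE : LDD_schedule t1 a d E s.

Lemma ldd_feasible : feasible t1 a d E s.
Proof.
have [int [inj [start start_exists]]] := lddE.
split; [|split].
- by move=> i iE; have [k sk] := int i iE; have [_ [_ win] _] := start k i iE sk; rewrite sk.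
- move=> i j iE jE ij; have [k sk] := int i iE; have [m sm] := int j jE.
  rewrite sk sm !natr1 !ler_nat; case: (ltngtP k m) => [| |km]; [by left|by right|].
  by case/eqP: ij; apply: inj; rewrite // sk sm km.
move=> tau idle j ej; have [_ /andP[aj _]] := ej.
have /andP[k1 k2] := truncn_itv (le_trans (ler0n _ _) aj).
have [i iE si] := start_exists _ (free_at_nat int (k := Num.truncn tau))
  (ex_intro _ j (executable_truncn ej)).
by apply: idle; exists i => //=; rewrite si k1 natr1.
Qed.

Lemma completed_ldd_step tau :
  ldd_step a d (completed E s tau) (completed E s tau.+1) tau.
Proof.
case: (completed_step ldd_feasible tau) => [idle|[x xE [run ->]]]; first by left.
have [int [_ [start _]]] := lddE.
have sx : s x = tau%:R.
  have [k sk] := int x xE; move: run; rewrite sk natr1 ler_nat ltr_nat => run.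
  by case/andP: run => ? ?; congr (_%:R); lia.
right; exists x => //; split; first exact: (running_avail ldd_feasible xE run).
have [_ _ xmax] := start tau x xE sx.
by move=> j /(completed_executable (free_at_nat int (k := tau))) /xmax.
Qed.

End LDD.

Section Existence.
Let T := \max_i d i.
Let E0 := logged (ldd_log a d T).
Let s0 i : R := (index (Some i) (ldd_log a d T))%:R.

Lemma ldd_log_executable j tau : executable t1 a d E0 s0 j tau%:R ->
  (tau < T)%N /\ avail a d (logged (ldd_log a d tau)) tau j.
Proof.
case=> fresh /andP[aj jc]; rewrite ler_nat_crit in jc.
have tT : (tau < T)%N := leq_trans jc (leq_bigmax j).
split=> //; rewrite /avail jc andbT -(ler_nat R) aj andbT inE.
rewrite (mem_ldd_log a d _ (ltnW tT)); apply/negP => early; apply: fresh.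
by rewrite inE -index_mem size_ldd_log ltr_nat (leq_trans early (ltnW tT)).
Qed.

Lemma ldd_log_schedule : LDD_schedule t1 a d E0 s0.
Proof.
have int i : i \in E0 -> exists k : nat, s0 i = k%:R by exists (index (Some i) (ldd_log a d T)).
have logged_nth i : i \in E0 ->
    nth None (ldd_log a d T) (index (Some i) (ldd_log a d T)) = Some i.
  by rewrite inE => /nth_index.
split=> //; split; [|split].
- move=> i j iE jE /eqP; rewrite eqr_nat => /eqP same.
  by have := logged_nth i iE; rewrite same logged_nth // => -[].
- move=> tau i iE si.
  have idx : index (Some i) (ldd_log a d T) = tau by apply/eqP; rewrite -(eqr_nat R) -si.
  have tT : (tau < T)%N by rewrite -idx -{2}(size_ldd_log a d T) index_mem; rewrite inE in iE.
  have := logged_nth i iE; rewrite idx nth_ldd_log //.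
  case/ldd_pick_some => /and3P[_ ai di] imax.
  split; first exact: free_at_nat.
    by split; [rewrite si ltxx => -[] | rewrite ler_nat_crit ler_nat ai di].
  by move=> j /ldd_log_executable[_ /imax].
- move=> tau _ [j /ldd_log_executable[tT aj]].
  have [i pick] := ldd_pick_avail aj; rewrite -(nth_ldd_log a d tT) in pick.
  exists i; first by rewrite inE -pick mem_nth ?size_ldd_log.
  by rewrite /s0 (index_ldd_log tT pick).
Qed.

End Existence.

End Discretization.

Theorem theorem3 (R : realType) (n : nat) (a d : 'I_n -> nat) :
  (exists E (s : 'I_n -> R), LDD_schedule (fun _ => 1%N) a d E s) /\
  (forall E (s : 'I_n -> R), LDD_schedule (fun _ => 1%N) a d E s ->
     feasible (fun _ => 1%N) a d E s /\
     forall E' (s' : 'I_n -> R), feasible (fun _ => 1%N) a d E' s' ->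
       (work (fun _ => 1%N) E <= work (fun _ => 1%N) E')%N).
Proof.
split; first by do 2 eexists; apply: ldd_log_schedule.
move=> E s lddE; have feasE := ldd_feasible lddE; split=> // E' s' feasE'.
have late j : (d j <= \max_i d i)%N := leq_bigmax j.
rewrite /work !sum1_card -(completed_late feasE late) -(completed_late feasE' late).
exact: leq_card_ldd (completed0 feasE) (completed0 feasE') (completed_arrived feasE)
  (completed_arrived feasE') (completed_ldd_step lddE) (completed_unit_step feasE') _.
Qed.
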